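(* Let $b(\lambda)=\frac14\lambda^4+\frac12p\lambda^2+q\lambda$ with $p<0$, $q\in\mathbb{R}$, let $b^*(\eta)=\sup_{\lambda}[\eta\lambda-b(\lambda)]$, and $A(x,r,\eta)=b(x)+b(r)-\eta(x+r)+2b^*(\eta)$. If $|x|=\sqrt{-p}$, then $A(x,-x,\eta)=(\eta-q)h(\eta)$ for a function $h$ satisfying $|h(\eta)|\approx(1+|\eta|)^{1/3}$ for all $\eta\in\mathbb{R}$.
   Context: $X\approx Y$ means $cY\le X\le c^{-1}Y$ for some $c>0$ independent of $\eta$ (it may depend on $p,q$). *)

From mathcomp Require Import all_boot all_order all_algebra.
From mathcomp Require Import all_classical all_reals all_analysis.
Set Implicit Arguments. Unset Strict Implicit. Unset Printing Implicit Defensive.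
Import Order.TTheory GRing.Theory Num.Theory.
Local Open Scope ring_scope.
Local Open Scope classical_set_scope.

Definition bfun (R : realType) (p q l : R) : R :=
  l ^+ 4 / 4 + p * l ^+ 2 / 2 + q * l.

Definition bstar (R : realType) (p q eta : R) : R :=
  sup [set y | exists l : R, y = eta * l - bfun p q l].

Definition Afun (R : realType) (p q x r eta : R) : R :=
  bfun p q x + bfun p q r - eta * (x + r) + 2 * bstar p q eta.

From mathcomp Require Import all_boot all_order all_algebra.
From mathcomp Require Import all_classical all_reals all_analysis.
From mathcomp Require Import lra ring.
Set Implicit Arguments. Unset Strict Implicit.
Import Order.TTheory GRing.Theory Num.Theory.
Local Open Scope ring_scope.

(* With s = sqrt(-p) one has eta l - b(l) = (eta - q) l - (l^2 - s^2)^2/4 + p^2/4,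
   and b(x) + b(-x) = -p^2/2 when x^2 = s^2, so A(x,-x,eta) = 2 (b*(eta) - p^2/4)
   is twice the Legendre transform, at t = eta - q, of the double well
   (l^2 - s^2)^2/4.  That transform is comparable to |t| (1 + |t|)^(1/3): the
   pairing t l only beats the well for |l| of order (1 + |t|)^(1/3), and the
   point l = s + d t/(1 + |t|)^(2/3) for a small d > 0, slightly past the
   bottom of the well, attains the bound from below.  Dividing by t = eta - q
   gives h, and the shift by q changes (1 + |t|)^(1/3) by at most the factor
   (1 + |q|)^(1/3). *)

Section Weight.
Variable R : realType.
Implicit Types a b q s t : R.

Definition weight t : R := (1 + `|t|) `^ (3^-1).

Lemma weight_norm t : weight `|t| = weight t.
Proof. by rewrite /weight ger0_norm. Qed.

Lemma weight0 : weight 0 = 1.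
Proof. by rewrite /weight normr0 addr0 powR1. Qed.

Lemma weight_ge0 t : 0 <= weight t.
Proof. exact: powR_ge0. Qed.

Lemma weight_cube t : weight t ^+ 3 = 1 + `|t|.
Proof.
by rewrite -powR_mulrn ?powR_ge0 // -powRrM mulVf ?powRr1 // ?addr_ge0 // pnatr_eq0.
Qed.

Lemma weight_ge1 t : 1 <= weight t.
Proof.
rewrite leNgt; apply/negP => w_lt1.
have : weight t ^+ 3 < 1 by rewrite expr_lt1 ?weight_ge0.
by rewrite weight_cube; have := normr_ge0 t; lra.
Qed.

Lemma weightD_le s t : weight (s + t) <= weight s * weight t.
Proof.
rewrite /weight -powRM ?addr_ge0 //; apply: ge0_ler_powR; rewrite ?nnegrE.
- by rewrite invr_ge0.
- by rewrite addr_ge0.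
- by rewrite mulr_ge0 ?addr_ge0.
have := ler_normD s t; have := mulr_ge0 (normr_ge0 s) (normr_ge0 t); lra.
Qed.

Lemma weight_comparable_shift (f : R -> R) q a b : 0 < a -> 0 < b ->
    (forall t, a * weight (t - q) <= f t /\ f t <= b * weight (t - q)) ->
  exists c, 0 < c /\ forall t, c * weight t <= f t /\ f t <= c^-1 * weight t.
Proof.
move=> a_gt0 b_gt0 f_bounds.
set wq := weight q.
have wq_ge1 : 1 <= wq := weight_ge1 q.
have wq_gt0 : 0 < wq by lra.
have shift_le t : weight t <= wq * weight (t - q).
  by rewrite mulrC -{1}(subrK q t) weightD_le.
have wqN : weight (- q) = wq by rewrite -weight_norm normrN weight_norm.
have unshift_le t : weight (t - q) <= wq * weight t by rewrite mulrC -wqN weightD_le.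
set c := Num.min (a / wq) (b * wq)^-1.
have c_gt0 : 0 < c by rewrite lt_min divr_gt0 // invr_gt0 mulr_gt0.
have c_le : c * wq <= a.
  by rewrite -ler_pdivlMr // ge_min lexx.
have cinv_ge : b * wq <= c^-1.
  by rewrite -[b * wq]invrK lef_pV2 ?posrE ?invr_gt0 ?mulr_gt0 // ge_min lexx orbT.
exists c; split => // t; have [lo hi] := f_bounds t.
have wt_ge0 := weight_ge0 t; have wtq_ge0 := weight_ge0 (t - q).
have := shift_le t; have := unshift_le t; split; nra.
Qed.

End Weight.

Section DoubleWell.
Variable R : realType.
Implicit Types s t l T L : R.

Lemma double_well_pairing_le_nneg s T L : 0 <= s -> 0 <= T -> 0 <= L ->
  T * L - (L ^+ 2 - s ^+ 2) ^+ 2 / 4 <= (2 + 2 * s) * T * weight T.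
Proof.
move=> s_ge0 T_ge0 L_ge0.
set M := weight T.
have M_ge1 : 1 <= M := weight_ge1 T.
have M3 : M ^+ 3 = 1 + T by rewrite weight_cube ger0_norm.
have [L_small | L_big] := lerP L ((2 + 2 * s) * M).
  by have := ler_wpM2l T_ge0 L_small; have := sqr_ge0 (L ^+ 2 - s ^+ 2); nra.
have two_s_le : 2 * s <= L by nra.
have two_M_le : 2 * M <= L by nra.
have well_ge : 3 / 4 * L ^+ 2 <= L ^+ 2 - s ^+ 2 by nra.
have well_sq_ge : 9 / 16 * L ^+ 4 <= (L ^+ 2 - s ^+ 2) ^+ 2.
  have h0 : 0 <= 3 / 4 * L ^+ 2 by nra.
  by have := ler_pM h0 h0 well_ge well_ge; nra.
have cube_le : 8 * T <= L ^+ 3.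
  have : (2 * M) ^+ 3 <= L ^+ 3 by rewrite lerXn2r // nnegrE; nra.
  by rewrite exprMn M3; lra.
have : 9 / 8 * T * L <= 9 / 64 * L ^+ 4 by nra.
have : 0 <= (2 + 2 * s) * T * M by rewrite !mulr_ge0 //; lra.
have : 0 <= T * L by exact: mulr_ge0.
lra.
Qed.

Lemma double_well_pairing_le s t l : 0 <= s ->
  t * l - (l ^+ 2 - s ^+ 2) ^+ 2 / 4 <= (2 + 2 * s) * `|t| * weight t.
Proof.
move=> s_ge0.
have := double_well_pairing_le_nneg s_ge0 (normr_ge0 t) (normr_ge0 l).
rewrite real_normK ?num_real // weight_norm.
have : t * l <= `|t| * `|l| by rewrite -normrM real_ler_norm ?num_real.
lra.
Qed.

Lemma cube_weight_split T : 0 <= T ->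
  let u := T / weight T ^+ 2 in
  [/\ 0 <= u, u <= T, u ^+ 2 <= T, u ^+ 3 <= T & T * weight T = u + u * T].
Proof.
move=> T_ge0 u.
set M := weight T.
have M_ge1 : 1 <= M := weight_ge1 T.
have M3 : M ^+ 3 = 1 + T by rewrite weight_cube ger0_norm.
have M2_ge1 : 1 <= M ^+ 2 by nra.
have uM : u * M ^+ 2 = T by rewrite divfK // gt_eqF // (lt_le_trans ltr01 M2_ge1).
have u_ge0 : 0 <= u by rewrite divr_ge0 // sqr_ge0.
have u_le_M : u <= M.
  by rewrite -(ler_pM2r (_ : 0 < M ^+ 2)); [rewrite uM -exprS M3; lra | nra].
have u2_le : u ^+ 2 <= T.
  by rewrite -uM expr2 ler_wpM2l //; nra.
split => //; first nra.
  by rewrite -uM exprS ler_wpM2l // lerXn2r // nnegrE; lra.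
by rewrite -{1}uM -mulrA -exprSr M3; ring.
Qed.

Definition double_well_lower_const s : R := Num.min s (1 / (8 * (s ^+ 2 + s + 1))).

Lemma double_well_lower_const_gt0 s : 0 < s -> 0 < double_well_lower_const s.
Proof.
by move=> s_gt0; rewrite lt_min s_gt0 divr_gt0 // mulr_gt0 //; nra.
Qed.

Lemma double_well_pairing_ge_nneg s T : 0 < s -> 0 <= T ->
  exists2 L, 0 <= L &
    double_well_lower_const s * T * weight T <= T * L - (L ^+ 2 - s ^+ 2) ^+ 2 / 4.
Proof.
move=> s_gt0 T_ge0.
have [u_ge0 u_le u2_le u3_le TM] := cube_weight_split T_ge0.
set u := T / _ in u_ge0 u_le u2_le u3_le TM.
set d := 1 / (4 * (s ^+ 2 + s + 1)).
have d_gt0 : 0 < d by rewrite divr_gt0 // mulr_gt0 //; nra.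
have d_eq : d * (s ^+ 2 + s + 1) = 1 / 4 by rewrite /d; field; nra.
have d_small : s ^+ 2 * d + s * d ^+ 2 + d ^+ 3 / 4 <= 1 / 2.
  have : d ^+ 2 <= d by nra.
  have : d ^+ 3 <= 1 by nra.
  nra.
exists (s + d * u); first nra.
(* Each of u^2, u^3, u^4 is at most u T, so the well term costs at most (d/2) u T. *)
have well_le : ((s + d * u) ^+ 2 - s ^+ 2) ^+ 2 / 4 <= d / 2 * (u * T).
  have -> : ((s + d * u) ^+ 2 - s ^+ 2) ^+ 2 / 4
      = s ^+ 2 * d ^+ 2 * u ^+ 2 + s * d ^+ 3 * u ^+ 3 + d ^+ 4 * u ^+ 4 / 4 by field.
  have u2 : u ^+ 2 <= u * T by rewrite expr2 ler_wpM2l.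
  have u3 : u ^+ 3 <= u * T by rewrite exprS ler_wpM2l.
  have u4 : u ^+ 4 <= u * T by rewrite exprS ler_wpM2l.
  have d_ge0 := ltW d_gt0; have s_ge0 := ltW s_gt0.
  have := ler_wpM2l (mulr_ge0 (sqr_ge0 s) (sqr_ge0 d)) u2.
  have := ler_wpM2l (mulr_ge0 s_ge0 (exprn_ge0 3 d_ge0)) u3.
  have := ler_wpM2l (exprn_ge0 4 d_ge0) u4.
  have : (s ^+ 2 * d + s * d ^+ 2 + d ^+ 3 / 4) * d * (u * T) <= 1 / 2 * d * (u * T).
    by rewrite ler_wpM2r //; nra.
  nra.
set c := double_well_lower_const s.
have c_le_s : c <= s by rewrite ge_min lexx.
have c_le_d : c <= d / 2.
  have -> : d / 2 = 1 / (8 * (s ^+ 2 + s + 1)) by rewrite /d; field; nra.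
  by rewrite ge_min lexx orbT.
have c_ge0 : 0 <= c := ltW (double_well_lower_const_gt0 s_gt0).
rewrite -mulrA TM.
have : c * u <= s * u by rewrite ler_wpM2r.
have : c * (u * T) <= d / 2 * (u * T) by rewrite ler_wpM2r // mulr_ge0.
have : s * u <= s * T by rewrite ler_wpM2l //; lra.
have : 0 <= d * (u * T) by apply: mulr_ge0; [exact: ltW | exact: mulr_ge0].
have -> : T * (s + d * u) = s * T + d * (u * T) by ring.
lra.
Qed.

Lemma double_well_pairing_ge s t : 0 < s -> exists l,
  double_well_lower_const s * `|t| * weight t <= t * l - (l ^+ 2 - s ^+ 2) ^+ 2 / 4.
Proof.
move=> s_gt0; have [L L_ge0] := double_well_pairing_ge_nneg s_gt0 (normr_ge0 t).
rewrite weight_norm => L_ok.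
exists (if 0 <= t then L else - L).
case: ifPn => [t_ge0 | ]; first by rewrite (ger0_norm t_ge0) in L_ok *.
rewrite -ltNge => t_lt0.
rewrite (ltr0_norm t_lt0) in L_ok; rewrite (ltr0_norm t_lt0) sqrrN.
by have -> : t * - L = - t * L by rewrite mulrN mulNr.
Qed.


End DoubleWell.

Section Legendre.
Variable R : realType.
Implicit Types p q eta s : R.

Lemma bfun_pairingE p q eta s l : s ^+ 2 = - p ->
  eta * l - bfun p q l = (eta - q) * l - (l ^+ 2 - s ^+ 2) ^+ 2 / 4 + p ^+ 2 / 4.
Proof. by move=> s2; rewrite s2 /bfun; field. Qed.

Local Open Scope classical_set_scope.

Lemma bstar_ubound p q eta s : 0 <= s -> s ^+ 2 = - p ->
  ubound [set y | exists l, y = eta * l - bfun p q l]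
    (p ^+ 2 / 4 + (2 + 2 * s) * `|eta - q| * weight (eta - q)).
Proof.
move=> s_ge0 s2 _ [l ->]; rewrite (bfun_pairingE q eta l s2).
by have := double_well_pairing_le (eta - q) l s_ge0; lra.
Qed.

Lemma bstar_sub_le p q eta s : 0 <= s -> s ^+ 2 = - p ->
  bstar p q eta - p ^+ 2 / 4 <= (2 + 2 * s) * `|eta - q| * weight (eta - q).
Proof.
move=> s_ge0 s2.
have ne : [set y | exists l, y = eta * l - bfun p q l] !=set0.
  by exists (eta * 0 - bfun p q 0), 0.
by have := ge_sup ne (bstar_ubound s_ge0 s2); rewrite /bstar; lra.
Qed.

Lemma bstar_sub_ge p q eta s : 0 < s -> s ^+ 2 = - p ->
  double_well_lower_const s * `|eta - q| * weight (eta - q) <= bstar p q eta - p ^+ 2 / 4.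
Proof.
move=> s_gt0 s2; have [l l_ok] := double_well_pairing_ge (eta - q) s_gt0.
have ub : has_ubound [set y | exists l, y = eta * l - bfun p q l].
  by exists (p ^+ 2 / 4 + (2 + 2 * s) * `|eta - q| * weight (eta - q));
     apply: bstar_ubound => //; exact: ltW.
have := ub_le_sup ub (ex_intro _ l erefl); rewrite -/(bstar p q eta).
by rewrite (bfun_pairingE q eta l s2); lra.
Qed.

Local Close Scope classical_set_scope.

Lemma Afun_opp p q x eta : x ^+ 2 = - p ->
  Afun p q x (- x) eta = 2 * (bstar p q eta - p ^+ 2 / 4).
Proof.
move=> x2.
have -> : Afun p q x (- x) eta = (x ^+ 2) ^+ 2 / 2 + p * x ^+ 2 + 2 * bstar p q eta.
  by rewrite /Afun /bfun; field.
by rewrite x2; field.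
Qed.

Lemma bstar_sub_eq0 p q s : 0 < s -> s ^+ 2 = - p -> bstar p q q - p ^+ 2 / 4 = 0.
Proof.
move=> s_gt0 s2; have := bstar_sub_ge q q s_gt0 s2; have := bstar_sub_le q q (ltW s_gt0) s2.
by rewrite subrr normr0 !mulr0 !mul0r; lra.
Qed.

(* Both sides of [Afun_slopeE] vanish at [eta = q]; the value 1 = [weight 0]
   keeps [Afun_slope_bounds] valid there. *)
Definition Afun_slope p q x eta : R :=
  if eta == q then 1 else Afun p q x (- x) eta / (eta - q).

Lemma Afun_slopeE p q x eta s : 0 < s -> s ^+ 2 = - p -> x ^+ 2 = - p ->
  Afun p q x (- x) eta = (eta - q) * Afun_slope p q x eta.
Proof.
move=> s_gt0 s2 x2; rewrite /Afun_slope; case: eqP => [->|/eqP eta_neq].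
  by rewrite Afun_opp // (bstar_sub_eq0 q s_gt0 s2) subrr !mul0r mulr0.
by rewrite mulrC divfK // subr_eq0.
Qed.

Lemma Afun_slope_bounds p q x eta s : 0 < s -> s ^+ 2 = - p -> x ^+ 2 = - p ->
  Num.min (2 * double_well_lower_const s) 1 * weight (eta - q) <= `|Afun_slope p q x eta|
  /\ `|Afun_slope p q x eta| <= 2 * (2 + 2 * s) * weight (eta - q).
Proof.
move=> s_gt0 s2 x2; set a := Num.min _ _; set b := 2 * _.
have a_le1 : a <= 1 by rewrite ge_min lexx orbT.
have b_ge1 : 1 <= b by rewrite /b; lra.
have a_le : a <= 2 * double_well_lower_const s by rewrite ge_min lexx.
rewrite /Afun_slope; case: eqP => [->|/eqP eta_neq].
  by rewrite subrr weight0 normr1 !mulr1.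
have T_gt0 : 0 < `|eta - q| by rewrite normr_gt0 subr_eq0.
have := bstar_sub_ge q eta s_gt0 s2; have := bstar_sub_le q eta (ltW s_gt0) s2.
have w_ge1 := weight_ge1 (eta - q).
have c_gt0 := double_well_lower_const_gt0 s_gt0.
set K := bstar p q eta - _ => K_hi K_lo.
have lo_ge0 : 0 <= double_well_lower_const s * `|eta - q| * weight (eta - q).
  by rewrite !mulr_ge0 ?normr_ge0 ?weight_ge0 // ltW.
rewrite Afun_opp // -/K normf_div ger0_norm; last by lra.
have Tw_ge0 : 0 <= `|eta - q| * weight (eta - q) by rewrite mulr_ge0 ?weight_ge0.
split; [rewrite ler_pdivlMr // | rewrite ler_pdivrMr //].
  by have := ler_wpM2r Tw_ge0 a_le; lra.
by rewrite /b; lra.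
Qed.

End Legendre.

Theorem proposition6p4 (R : realType) (p q x : R) :
  p < 0 -> `|x| = Num.sqrt (- p) ->
  exists h : R -> R,
    (forall eta : R, Afun p q x (- x) eta = (eta - q) * h eta) /\
    exists c : R, 0 < c /\
      forall eta : R,
        c * (1 + `|eta|) `^ (3^-1) <= `|h eta| /\
        `|h eta| <= c^-1 * (1 + `|eta|) `^ (3^-1).
Proof.
move=> p_lt0 x_norm; set s := Num.sqrt (- p).
have s_gt0 : 0 < s by rewrite sqrtr_gt0 oppr_gt0.
have s2 : s ^+ 2 = - p by rewrite sqr_sqrtr // oppr_ge0 ltW.
have x2 : x ^+ 2 = - p by rewrite -real_normK ?num_real // x_norm.
exists (Afun_slope p q x); split => [eta|]; first exact: Afun_slopeE s_gt0 s2 x2.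
apply: (weight_comparable_shift (q := q) _ _ (fun eta => Afun_slope_bounds q eta s_gt0 s2 x2)).
- by rewrite lt_min ltr01 andbT mulr_gt0 // double_well_lower_const_gt0.
- by rewrite mulr_gt0 //; lra.
Qed.
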